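(* Let $X$ be a semi-permutation, let $T$ be any partitioning tree for $X$, let $U\subseteq V(T)$ be a set of vertices such that every root-to-leaf path of $T$ contains exactly one vertex of $U$, and let $(X^c,\{X^s_v\}_{v\in U})$ be the split of $(X,T)$ at $U$. Then $$\sum_{v\in U}\mathrm{opt}(X^s_v)+\mathrm{opt}(X^c)\le \mathrm{opt}(X).$$
   Context: Points have integer coordinates. Two points $p,q$ are collinear if $p.x=q.x$ or $p.y=q.y$; otherwise $\square_{p,q}$ is the smallest closed axis-parallel rectangle containing both. A non-collinear pair $(p,q)$ is satisfied in $S$ if some $r\in S\setminus\{p,q\}$ lies in $\square_{p,q}$; $S$ is satisfied if all its non-collinear pairs are. A row (column) is active for $X$ if it contains a point of $X$; $X$ is a semi-permutation if each active row contains exactly one point of $X$. $\mathrm{opt}(X)$ is the minimum $|Y|$ with $X\cup Y$ satisfied (and is $0$ if $X$ has one active column). Partitioning tree: let $B$ be the bounding box of $X$ and $\mathcal L$ the set of vertical lines with half-integral $x$-coordinate strictly between the minimum and maximum $x$-coordinates of $X$. A partitioning tree $T$ is a rooted binary tree whose vertices $v$ carry closed vertical strips $S(v)$: $S(\mathrm{root})=B$; an internal vertex $v$ owns a line $L(v)\in\mathcal L$ lying strictly inside $S(v)$ and its two children carry the two strips into which $L(v)$ splits $S(v)$; each leaf strip contains exactly one active column of $X$ (this is the tree produced by processing the lines of $\mathcal L$ in some order, each line splitting the current strip containing it). Split at $U$: for $v\in U$, the strip instance $X^s_v=X\cap S(v)$; the compressed instance $X^c$ is obtained by replacing, for every $v\in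 U$, each point $p\in X\cap S(v)$ by the point $(x_v,p.y)$, where $x_v$ is the $x$-coordinate of the leftmost active column of $X$ in $S(v)$ (i.e., collapsing all active columns of each strip $S(v)$ into one column). *)

From mathcomp Require Import all_boot all_order all_algebra.
From Stdlib Require Import ClassicalEpsilon.
Set Implicit Arguments. Unset Strict Implicit. Unset Printing Implicit Defensive.
Import Order.TTheory GRing.Theory Num.Theory.
Local Open Scope ring_scope.

(* A point (x, y) with integer coordinates: p.1 = x, p.2 = y. *)
Definition point := (int * int)%type.

Definition in_box (p q r : point) : bool :=
  (Num.min p.1 q.1 <= r.1 <= Num.max p.1 q.1) &&
  (Num.min p.2 q.2 <= r.2 <= Num.max p.2 q.2).

Definition satisfied (S : seq point) : Prop :=
  forall p q, p \in S -> q \in S -> p.1 != q.1 -> p.2 != q.2 ->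
    exists r, [/\ r \in S, r != p, r != q & in_box p q r].

Definition semi_perm (X : seq point) : Prop :=
  forall p q, p \in X -> q \in X -> p.2 = q.2 -> p = q.

Definition has_sol (X : seq point) (n : nat) : Prop :=
  exists Y : seq point, [/\ uniq Y, size Y = n & satisfied (X ++ Y)].

Definition has_solb (X : seq point) (n : nat) : bool :=
  if excluded_middle_informative (has_sol X n) then true else false.

Lemma has_solbP X n : reflect (has_sol X n) (has_solb X n).
Proof.
by rewrite /has_solb; case: excluded_middle_informative => h; constructor.
Qed.

(* The grid of active columns x active rows always works. *)
Lemma has_sol_ex X : exists n, has_solb X n.
Proof.
pose G := undup [seq (x, y) | x <- [seq p.1 | p <- X], y <- [seq p.2 | p <- X]].
exists (size G); apply/has_solbP; exists G; split => //; first exact: undup_uniq.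
have hx : forall p, p \in X ++ G -> p.1 \in [seq p.1 | p <- X].
  move=> p; rewrite mem_cat => /orP [pX|]; first by apply/mapP; exists p.
  rewrite mem_undup => /allpairsP [[x y] [hx _ ->]] //.
have hy : forall p, p \in X ++ G -> p.2 \in [seq p.2 | p <- X].
  move=> p; rewrite mem_cat => /orP [pX|]; first by apply/mapP; exists p.
  rewrite mem_undup => /allpairsP [[x y] [_ hy ->]] //.
move=> p q pS qS nx ny; exists (p.1, q.2); split.
- rewrite mem_cat mem_undup; apply/orP; right; apply/allpairsP.
  by exists (p.1, q.2); split; [exact: hx pS | exact: hy qS | by []].
- by apply/eqP => /(congr1 snd) /= /eqP; rewrite eq_sym (negbTE ny).
- by apply/eqP => /(congr1 fst) /= /eqP; rewrite (negbTE nx).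
- by rewrite /in_box /= ge_min le_max ge_min le_max !lexx ?orbT ?orTb.
Qed.

Definition opt (X : seq point) : nat := ex_minn (has_sol_ex X).

(* A vertical line with x-coordinate k + 1/2 is represented by the integer k.
   A closed vertical strip (within the bounding box B) is represented by the
   pair (a, b) of the smallest and largest integer x-coordinates it contains. *)

Definition minx (X : seq point) : int :=
  \big[Num.min/(head (0, 0) X).1]_(p <- X) p.1.
Definition maxx (X : seq point) : int :=
  \big[Num.max/(head (0, 0) X).1]_(p <- X) p.1.

Definition in_strip (s : int * int) (x : int) : bool := (s.1 <= x <= s.2).

Definition ncols (X : seq point) (s : int * int) : nat :=
  size (undup [seq p.1 | p <- X & in_strip s p.1]).

Inductive ptree := Leaf | Node of int & ptree & ptree.

Fixpoint valid_tree (X : seq point) (t : ptree) (a b : int) : bool :=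
  match t with
  | Leaf => ncols X (a, b) == 1%N
  | Node k l r => [&& a <= k, k < b, valid_tree X l a k & valid_tree X r (k + 1) b]
  end.

Definition is_ptree (X : seq point) (t : ptree) : bool :=
  valid_tree X t (minx X) (maxx X).

(* Vertices of t, as (address, strip) pairs; the address is the sequence of
   left (false) / right (true) choices from the root. *)
Fixpoint nodes (t : ptree) (a b : int) : seq (seq bool * (int * int)) :=
  match t with
  | Leaf => [:: ([::], (a, b))]
  | Node k l r => ([::], (a, b)) ::
      [seq (false :: v.1, v.2) | v <- nodes l a k] ++
      [seq (true :: v.1, v.2) | v <- nodes r (k + 1) b]
  end.

Fixpoint leaves (t : ptree) : seq (seq bool) :=
  match t with
  | Leaf => [:: [::]]
  | Node _ l r => [seq false :: v | v <- leaves l] ++ [seq true :: v | v <- leaves r]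
  end.

(* U is a set of vertices of T such that every root-to-leaf path of T
   contains exactly one vertex of U (the vertices on the path to leaf w are
   exactly those whose address is a prefix of w). *)
Definition cut (X : seq point) (t : ptree) (U : seq (seq bool * (int * int))) : Prop :=
  [/\ uniq U, {subset U <= nodes t (minx X) (maxx X)} &
      forall w, w \in leaves t -> count (fun u => prefix u.1 w) U = 1%N].

Definition strip_inst (X : seq point) (s : int * int) : seq point :=
  [seq p <- X | in_strip s p.1].

Definition leftcol (X : seq point) (s : int * int) : int :=
  \big[Num.min/s.2]_(p <- X | in_strip s p.1) p.1.

Definition compress_x (X : seq point) (U : seq (seq bool * (int * int))) (x : int) : int :=
  match [seq u <- U | in_strip u.2 x] with
  | u :: _ => leftcol X u.2
  | [::] => x
  end.

Definition compressed (X : seq point) (U : seq (seq bool * (int * int))) : seq point :=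
  [seq (compress_x X U p.1, p.2) | p <- X].

(* Fix an optimal solution Y of X and put Z = X ++ Y.  Collapsing a strip s onto
   its leftmost active column is monotone in both coordinates, and monotone maps
   preserve satisfaction; so the image of Z solves collapse X s, with the points
   of Y outside s plus one new point for each row of Z ∩ s that is not active in
   X ∩ s.  Inside s, Z ∩ s solves X ∩ s; moreover two adjacent occupied rows of
   a satisfied set share a column, so each of those extra rows can be merged
   into an adjacent row (again a monotone map) at the cost of a point of Y ∩ s.
   Hence opt(X ∩ s) plus the number of extra rows is at most |Y ∩ s|, and adding
   the two bounds gives opt(X ∩ s) + opt(collapse X s) <= opt(X).  The strips of
   U are pairwise disjoint, so the compressed instance arises by collapsing them
   one at a time. *)

From mathcomp Require Import all_boot all_order all_algebra zify.
Set Implicit Arguments. Unset Strict Implicit. Unset Printing Implicit Defensive.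
Import Order.TTheory GRing.Theory Num.Theory.
Local Open Scope ring_scope.

Local Notation vertex := (seq bool * (int * int))%type.

Definition l1 (p q : point) : nat := (`|p.1 - q.1| + `|p.2 - q.2|)%N.

Lemma l1_in_box_ltl (p q r : point) : in_box p q r -> r != p -> (l1 r q < l1 p q)%N.
Proof.
case: p q r => [p1 p2] [q1 q2] [r1 r2].
rewrite /in_box /l1 /= xpair_eqE negb_and; lia.
Qed.

Lemma l1_in_box_ltr (p q r : point) : in_box p q r -> r != q -> (l1 p r < l1 p q)%N.
Proof.
case: p q r => [p1 p2] [q1 q2] [r1 r2].
rewrite /in_box /l1 /= xpair_eqE negb_and; lia.
Qed.

Lemma homo_min_max (A : {pred int}) (f : int -> int) x1 x2 y :
  {in A &, {homo f : u v / u <= v}} -> x1 \in A -> x2 \in A -> y \in A ->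
  Num.min x1 x2 <= y <= Num.max x1 x2 ->
  Num.min (f x1) (f x2) <= f y <= Num.max (f x1) (f x2).
Proof.
move=> hf x1A x2A yA; wlog le12 : x1 x2 x1A x2A / x1 <= x2 => [hwlog|].
  have /orP [le12|le21] := le_total x1 x2; first exact: hwlog.
  by rewrite minC maxC [Num.min (f _) _]minC [Num.max (f _) _]maxC; apply: hwlog.
rewrite (min_idPl le12) (max_idPr le12) => /andP [h1 h2].
by rewrite ge_min le_max (hf _ _ x1A yA h1) (hf _ _ yA x2A h2) orbT.
Qed.

Lemma satisfied_eq_mem (S S' : seq point) : S =i S' -> satisfied S -> satisfied S'.
Proof.
move=> eS hS p q; rewrite -!eS => pS qS n1 n2.
by have [r [rS rp rq rpq]] := hS p q pS qS n1 n2; exists r; rewrite -eS.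
Qed.

Lemma satisfied_strip (Z : seq point) s : satisfied Z -> satisfied (strip_inst Z s).
Proof.
move=> hZ p q; rewrite !mem_filter => /andP [ps pZ] /andP [qs qZ] n1 n2.
have [r [rZ rp rq rpq]] := hZ p q pZ qZ n1 n2.
exists r; split; rewrite // mem_filter rZ andbT.
by move: ps qs rpq; rewrite /in_strip /in_box; lia.
Qed.

Lemma satisfied_map (f g : int -> int) (Z : seq point) :
  satisfied Z ->
  {in map fst Z &, {homo f : x y / x <= y}} -> {in map snd Z &, {homo g : x y / x <= y}} ->
  satisfied [seq (f p.1, g p.2) | p <- Z].
Proof.
move=> hZ hf hg; pose F (p : point) : point := (f p.1, g p.2).
suff FZ a b : a \in Z -> b \in Z -> (F a).1 != (F b).1 -> (F a).2 != (F b).2 ->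
    exists r, [/\ r \in map F Z, r != F a, r != F b & in_box (F a) (F b) r].
  by move=> _ _ /mapP [a aZ ->] /mapP [b bZ ->]; apply: FZ.
(* Induct on l1 a b: if F r = F a for the witness r of (a, b), then (r, b) is closer. *)
have [n] := ubnP (l1 a b); elim: n a b => // n IH a b lt_ab aZ bZ nx ny.
have [r [rZ ra rb rab]] : exists r, [/\ r \in Z, r != a, r != b & in_box a b r].
  by apply: hZ => //; [move: nx | move: ny]; apply: contraNneq => e; rewrite /F e.
have Frab : in_box (F a) (F b) (F r).
  by move: rab; rewrite /in_box => /andP [rx ry];
     rewrite (homo_min_max hf) ?(homo_min_max hg) ?map_f.
have [era|nra] := eqVneq (F r) (F a).
  by rewrite -era; apply: IH; rewrite ?era //; apply: leq_trans (l1_in_box_ltl rab ra) _.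
have [erb|nrb] := eqVneq (F r) (F b).
  by rewrite -erb; apply: IH; rewrite ?erb //; apply: leq_trans (l1_in_box_ltr rab rb) _.
by exists (F r); split; rewrite ?map_f.
Qed.

Lemma opt_spec (X : seq point) :
  exists Y : seq point, [/\ uniq Y, size Y = opt X & satisfied (X ++ Y)].
Proof. by rewrite /opt; case: ex_minnP => m /has_solbP. Qed.

Lemma opt_min (W Y : seq point) : uniq Y -> satisfied (W ++ Y) -> (opt W <= size Y)%N.
Proof. by move=> uY hY; rewrite /opt; case: ex_minnP => m _; apply; apply/has_solbP; exists Y. Qed.

Lemma opt_nil : opt [::] = 0%N.
Proof. by apply/eqP; rewrite -leqn0 (@opt_min [::] [::]). Qed.

Definition extra_points (Z W : seq point) : seq point := undup [seq z <- Z | z \notin W].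

Definition extra_rows (Z W : seq point) : seq int :=
  undup [seq z.2 | z <- Z & z.2 \notin map snd W].

Lemma opt_le_extra_points (Z W : seq point) :
  satisfied Z -> {subset W <= Z} -> (opt W <= size (extra_points Z W))%N.
Proof.
move=> hZ WZ; apply: opt_min; first exact: undup_uniq.
apply: satisfied_eq_mem hZ => z; rewrite mem_cat mem_undup mem_filter.
by case: (boolP (z \in W)) => [/WZ ->|].
Qed.

Definition between (a b y : int) : bool := (a < y < b) || (b < y < a).

Lemma adjacent_row (Z : seq point) (r : int) (u : point) : u \in Z -> u.2 != r ->
  exists2 v, v \in Z /\ v.2 != r & {in Z, forall t : point, ~~ between v.2 r t.2}.
Proof.
have [n] := ubnP (`|u.2 - r|)%N; elim: n u => // n IH u lt_u uZ ur.
have [/hasP [t tZ btw]|/hasPn gap] := boolP (has (fun t : point => between u.2 r t.2) Z).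
  by apply: (IH t) => //; move: btw lt_u; rewrite /between; lia.
by exists u.
Qed.

Lemma shared_column (Z : seq point) (a r : int) : satisfied Z -> a != r ->
  {in Z, forall t : point, ~~ between a r t.2} ->
  forall z u : point, z \in Z -> u \in Z -> z.2 = r -> u.2 = a ->
  exists c, (c, r) \in Z /\ (c, a) \in Z.
Proof.
move=> hZ ar gap z u; have [n] := ubnP (l1 z u).
elim: n z u => // n IH z u lt_zu zZ uZ zr ua.
have [e1|ne1] := eqVneq z.1 u.1.
  by exists z.1; rewrite -zr -ua {2}e1 -!surjective_pairing.
have [t [tZ tz tu tzu]] : exists t : point, [/\ t \in Z, t != z, t != u & in_box z u t].
  by apply: hZ; rewrite // zr ua eq_sym.
have /orP [/eqP tr|/eqP ta] : (t.2 == r) || (t.2 == a).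
  by move: (gap t tZ) tzu; rewrite /between /in_box zr ua; lia.
- by apply: (IH t u) => //; exact: leq_trans (l1_in_box_ltl tzu tz) lt_zu.
- by apply: (IH z t) => //; exact: leq_trans (l1_in_box_ltr tzu tu) lt_zu.
Qed.

Definition merge_row (r a : int) (p : point) : point := (p.1, if p.2 == r then a else p.2).

Lemma merge_row_id r a (p : point) : p.2 != r -> merge_row r a p = p.
Proof. by move=> pr; rewrite /merge_row ifN -?surjective_pairing. Qed.

Lemma satisfied_merge_row (Z : seq point) r a : satisfied Z ->
  {in Z, forall t : point, ~~ between a r t.2} -> satisfied (map (merge_row r a) Z).
Proof.
move=> hZ gap; apply: (@satisfied_map id (fun y => if y == r then a else y)) => //.
move=> _ _ /mapP [p1 p1Z ->] /mapP [p2 p2Z ->]; move: (gap p1 p1Z) (gap p2 p2Z).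
by rewrite /between /=; case: eqP => ?; case: eqP => ?; lia.
Qed.

Lemma size_extra_rows_merge (Z W : seq point) r a : r \notin map snd W ->
  (size (extra_rows Z W) <= (size (extra_rows (map (merge_row r a) Z) W)).+1)%N.
Proof.
move=> rW; rewrite -[X in (_ <= X)%N]/(size (r :: _)).
apply: uniq_leq_size; first exact: undup_uniq.
move=> y; rewrite mem_undup => /mapP [p]; rewrite mem_filter => /andP [pW pZ] ->.
rewrite inE; case: eqVneq => //= pr; rewrite mem_undup; apply/mapP.
exists (merge_row r a p); last by rewrite merge_row_id.
by rewrite mem_filter (map_f _ pZ) andbT merge_row_id.
Qed.

Lemma size_extra_points_merge (Z W : seq point) r a c : r \notin map snd W -> a != r ->
  (c, r) \in Z -> (c, a) \in Z ->
  (size (extra_points (map (merge_row r a) Z) W) < size (extra_points Z W))%N.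
Proof.
move=> rW ar crZ caZ.
have crE : (c, r) \in extra_points Z W.
  by rewrite mem_undup mem_filter crZ andbT; apply: contra rW => crW; apply/mapP; exists (c, r).
suff sub : {subset extra_points (map (merge_row r a) Z) W
                   <= map (merge_row r a) (rem (c, r) (extra_points Z W))}.
  have := uniq_leq_size (undup_uniq _) sub; rewrite size_map size_rem //.
  by case: (extra_points Z W) crE => // p ps _ /=; rewrite ltnS.
move=> q; rewrite mem_undup mem_filter => /andP [qW /mapP [p pZ eq_q]]; subst q.
have [pcr|pcr] := eqVneq p (c, r); last first.
  apply/mapP; exists p => //.
  rewrite mem_rem_uniq ?undup_uniq // inE pcr mem_undup mem_filter pZ /= andbT.
  by apply: contra qW => pW; rewrite merge_row_id //; apply: contraNneq rW => <-; exact: map_f.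
have hcr : merge_row r a (c, r) = (c, a) by rewrite /merge_row /= eqxx.
rewrite pcr hcr in qW *; apply/mapP; exists (c, a); last by rewrite merge_row_id.
by rewrite mem_rem_uniq ?undup_uniq // inE xpair_eqE eqxx ar mem_undup mem_filter caZ qW.
Qed.

Lemma opt_add_extra_rows (Z W : seq point) w : satisfied Z -> w \in W -> {subset W <= Z} ->
  (opt W + size (extra_rows Z W) <= size (extra_points Z W))%N.
Proof.
have [n] := ubnP (size (extra_points Z W)); elim: n Z => // n IH Z lt_n hZ wW WZ.
case E: (extra_rows Z W) => [|r rs]; first by rewrite addn0 opt_le_extra_points.
have : r \in extra_rows Z W by rewrite E mem_head.
rewrite mem_undup => /mapP [z]; rewrite mem_filter => /andP [zW zZ] rz.
have rW : r \notin map snd W by rewrite rz.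
have Wr p : p \in W -> p.2 != r by move=> pW; apply: contraNneq rW => <-; exact: map_f.
have [v [vZ vr] gap] := adjacent_row (WZ w wW) (Wr w wW).
have [c [crZ cvZ]] := shared_column hZ vr gap zZ vZ (esym rz) erefl.
(* Merging row r into the adjacent row v.2 removes r and identifies (c, r) with (c, v.2). *)
have WZ' : {subset W <= map (merge_row r v.2) Z}.
  by move=> p pW; rewrite -(merge_row_id v.2 (Wr p pW)) map_f ?WZ.
have lt_merge := size_extra_points_merge rW vr crZ cvZ.
have := IH _ (leq_trans lt_merge lt_n) (satisfied_merge_row hZ gap) wW WZ'.
have := size_extra_rows_merge Z v.2 rW; rewrite -E; lia.
Qed.

Lemma size_extra_points_cat (W Y : seq point) : (size (extra_points (W ++ Y) W) <= size Y)%N.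
Proof.
apply: uniq_leq_size; first exact: undup_uniq.
by move=> q; rewrite mem_undup mem_filter mem_cat => /andP [/negbTE -> /=].
Qed.

Lemma leftcol_in_strip (X : seq point) s (p : point) :
  p \in X -> in_strip s p.1 -> in_strip s (leftcol X s).
Proof.
move=> pX /andP [s1p ps2]; apply/andP; split; last exact: bigmin_le_id.
by apply: le_bigmin => [|q /andP []//]; exact: le_trans s1p ps2.
Qed.

Definition collapse_x (X : seq point) (s : int * int) (x : int) : int :=
  if in_strip s x then leftcol X s else x.

Definition collapse (X : seq point) (s : int * int) : seq point :=
  [seq (collapse_x X s p.1, p.2) | p <- X].

Lemma collapse_x_homo (X : seq point) s (p : point) : p \in X -> in_strip s p.1 ->
  {homo collapse_x X s : x y / x <= y}.
Proof.
move=> pX ps x y; have := leftcol_in_strip pX ps.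
by rewrite /collapse_x /in_strip; case: ifP; case: ifP; lia.
Qed.

Lemma collapse_id (X : seq point) s : strip_inst X s = [::] -> collapse X s = X.
Proof.
move=> Xs0; apply: map_id_in => p pX; have : p \notin strip_inst X s by rewrite Xs0.
by rewrite mem_filter pX andbT /collapse_x => /negbTE ->; rewrite -surjective_pairing.
Qed.

Lemma size_extra_points_collapse (X Y : seq point) s :
  (size (extra_points [seq (collapse_x X s p.1, p.2) | p <- X ++ Y] (collapse X s))
   <= size [seq p <- Y | ~~ in_strip s p.1]
      + size (extra_rows (strip_inst (X ++ Y) s) (strip_inst X s)))%N.
Proof.
rewrite -(size_map (pair (leftcol X s)) (extra_rows _ _)) -size_cat.
apply: uniq_leq_size; first exact: undup_uniq.
move=> q; rewrite mem_undup mem_filter => /andP [qX /mapP [p pXY eq_q]].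
have pY : p \in Y.
  move: pXY; rewrite mem_cat => /orP [pX|//].
  by rewrite eq_q (map_f (fun p : point => (collapse_x X s p.1, p.2)) pX) in qX.
rewrite mem_cat eq_q; case ps: (in_strip s p.1).
  apply/orP; right; rewrite /collapse_x ps map_f // mem_undup.
  apply/mapP; exists p => //; rewrite !mem_filter ps pXY !andbT.
  apply: contra qX => /mapP [x]; rewrite mem_filter => /andP [xs xX] px.
  by apply/mapP; exists x; rewrite // eq_q px /collapse_x ps xs.
by rewrite mem_filter /collapse_x ps -surjective_pairing ps pY.
Qed.

Lemma opt_strip_collapse (X : seq point) s :
  (opt (strip_inst X s) + opt (collapse X s) <= opt X)%N.
Proof.
(* Without an active column in s, leftcol X s is the junk value s.2, possibly outside s. *)
have [/hasP [p pX ps]|noX] := boolP (has (fun p : point => in_strip s p.1) X); last first.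
  have Xs0 : strip_inst X s = [::] by apply/eqP; rewrite -[_ == _]negbK -has_filter.
  by rewrite Xs0 opt_nil collapse_id.
have [Y [uY <- hXY]] := opt_spec X.
have hcol : satisfied [seq (collapse_x X s p.1, p.2) | p <- X ++ Y].
  by apply: (@satisfied_map _ id) => //; apply: in2W; exact: collapse_x_homo pX ps.
have colXY : {subset collapse X s <= [seq (collapse_x X s p.1, p.2) | p <- X ++ Y]}.
  by move=> q /mapP [x xX ->]; rewrite map_f // mem_cat xX.
have stripXY : {subset strip_inst X s <= strip_inst (X ++ Y) s}.
  by move=> q; rewrite /strip_inst filter_cat mem_cat => ->.
have pXs : p \in strip_inst X s by rewrite mem_filter ps pX.
have inside := opt_add_extra_rows (@satisfied_strip _ s hXY) pXs stripXY.
have outside := leq_trans (opt_le_extra_points hcol colXY) (size_extra_points_collapse X Y s).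
have := size_extra_points_cat (strip_inst X s) (strip_inst Y s).
rewrite -filter_cat -/(strip_inst _ s).
have sizeY : (size (strip_inst Y s) + size [seq p <- Y | ~~ in_strip s p.1])%N = size Y.
  by rewrite !size_filter; exact: count_predC.
lia.
Qed.

Definition strip_disj (s t : int * int) : bool := (s.2 < t.1) || (t.2 < s.1).

Lemma in_strip_disj s t x : strip_disj s t -> in_strip s x -> ~~ in_strip t x.
Proof. rewrite /strip_disj /in_strip; lia. Qed.

Lemma leftcol_strip_inst (X : seq point) s : leftcol (strip_inst X s) s = leftcol X s.
Proof. by rewrite /leftcol big_filter_cond; apply: eq_bigl => p; rewrite andbb. Qed.

Lemma strip_inst_collapse (X : seq point) s t : strip_disj s t ->
  strip_inst (collapse X s) t = strip_inst X t.
Proof.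
move=> st; rewrite /strip_inst /collapse filter_map.
rewrite (@eq_in_filter _ _ (fun p : point => in_strip t p.1)); last first.
  move=> p pX /=; rewrite /collapse_x; case: ifP => // ps.
  by rewrite (negbTE (in_strip_disj st ps)) (negbTE (in_strip_disj st (leftcol_in_strip pX ps))).
apply: map_id_in => p; rewrite mem_filter => /andP [pt _].
rewrite /collapse_x ifN -?surjective_pairing //.
by apply: contraTN pt; exact: in_strip_disj.
Qed.

Lemma leftcol_collapse (X : seq point) s t : strip_disj s t ->
  leftcol (collapse X s) t = leftcol X t.
Proof. by move=> st; rewrite -leftcol_strip_inst strip_inst_collapse // leftcol_strip_inst. Qed.

Lemma compressed_nil (X : seq point) : compressed X [::] = X.
Proof. by apply: map_id_in => p _; rewrite /compress_x /= -surjective_pairing. Qed.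

Lemma compressed_cons (X : seq point) (u : vertex) U : {in U, forall v, strip_disj u.2 v.2} ->
  compressed X (u :: U) = compressed (collapse X u.2) U.
Proof.
move=> disj; rewrite /compressed /collapse -map_comp; apply/eq_in_map => p pX /=.
congr (_, _); rewrite /compress_x /= /collapse_x; case ps: (in_strip u.2 p.1).
  suff -> : [seq v <- U | in_strip v.2 (leftcol X u.2)] = [::] by [].
  apply/eqP; rewrite -[_ == _]negbK -has_filter; apply/hasPn => v vU.
  exact: in_strip_disj (disj v vU) (leftcol_in_strip pX ps).
case E: [seq v <- U | in_strip v.2 p.1] => [//|v vs].
have : v \in [seq v <- U | in_strip v.2 p.1] by rewrite E mem_head.
by rewrite mem_filter => /andP [_ vU]; rewrite leftcol_collapse // disj.
Qed.

Lemma opt_split_le (U : seq vertex) (X : seq point) : uniq U ->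
  {in U &, forall u v, u != v -> strip_disj u.2 v.2} ->
  (\sum_(u <- U) opt (strip_inst X u.2) + opt (compressed X U) <= opt X)%N.
Proof.
elim: U X => [|u U IH] X; first by rewrite big_nil compressed_nil.
rewrite /= => /andP [uU uniqU] disj.
have disj_u : {in U, forall v, strip_disj u.2 v.2}.
  move=> v vU; apply: disj; rewrite ?inE ?vU ?eqxx ?orbT //.
  by apply: contraNneq uU => ->.
rewrite big_cons compressed_cons // -addnA.
rewrite (eq_big_seq (fun v => opt (strip_inst (collapse X u.2) v.2))); last first.
  by move=> v vU; rewrite strip_inst_collapse ?disj_u.
apply: leq_trans (opt_strip_collapse X u.2); rewrite leq_add2l; apply: IH => //.
by move=> v w vU wU; apply: disj; rewrite inE ?vU ?wU orbT.
Qed.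

Lemma nodes_in_strip (X : seq point) t a b : valid_tree X t a b ->
  forall u : vertex, u \in nodes t a b -> (a <= u.2.1) && (u.2.2 <= b).
Proof.
elim: t a b => [|k l IHl r IHr] a b /=; first by move=> _ u; rewrite inE => /eqP ->; rewrite !lexx.
move=> /and4P [ak kb vl vr] u; rewrite inE mem_cat => /or3P [/eqP -> | | ]; first by rewrite !lexx.
- by move=> /mapP [v vl' ->] /=; have := IHl _ _ vl v vl'; lia.
- by move=> /mapP [v vr' ->] /=; have := IHr _ _ vr v vr'; lia.
Qed.

Lemma nodes_prefix_or_disj (X : seq point) t a b : valid_tree X t a b ->
  {in nodes t a b &, forall u v : vertex,
    [|| prefix u.1 v.1, prefix v.1 u.1 | strip_disj u.2 v.2]}.
Proof.
elim: t a b => [|k l IHl r IHr] a b /=; first by move=> _ u v; rewrite !inE => /eqP -> /eqP ->.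
move=> /and4P [ak kb vl vr] u v; rewrite !inE !mem_cat.
move=> /or3P [/eqP -> //| /mapP [u' ul ->] | /mapP [u' ur ->]];
  move=> /or3P [/eqP ->| /mapP [v' vl' ->] | /mapP [v' vr' ->]]; rewrite /= ?orbT //.
- exact: IHl _ _ vl _ _ ul vl'.
- have := nodes_in_strip vl ul; have := nodes_in_strip vr vr'; rewrite /strip_disj; lia.
- have := nodes_in_strip vr ur; have := nodes_in_strip vl vl'; rewrite /strip_disj; lia.
- exact: IHr _ _ vr _ _ ur vr'.
Qed.

Lemma nodes_prefix_leaf t a b (u : vertex) :
  u \in nodes t a b -> exists2 w, w \in leaves t & prefix u.1 w.
Proof.
elim: t a b u => [|k l IHl r IHr] a b u /=; first by rewrite inE => /eqP ->; exists [::].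
have root_l : ([::], (a, k)) \in nodes l a k by case: (l) => [|? ? ?]; rewrite /= mem_head.
rewrite inE mem_cat => /or3P [/eqP -> | /mapP [v vl ->] | /mapP [v vr ->]].
- by have [w wl _] := IHl _ _ _ root_l; exists (false :: w); rewrite ?mem_cat ?map_f.
- by have [w wl vw] := IHl _ _ _ vl; exists (false :: w); rewrite ?mem_cat ?map_f //= eqxx.
- by have [w wr vw] := IHr _ _ _ vr; exists (true :: w); rewrite ?mem_cat ?map_f ?orbT //= eqxx.
Qed.

Lemma cut_strip_disj (X : seq point) T (U : seq vertex) : is_ptree X T -> cut X T U ->
  {in U &, forall u v : vertex, u != v -> strip_disj u.2 v.2}.
Proof.
move=> vT [uniqU UT cnt].
have not_prefix (u v : vertex) : u \in U -> v \in U -> u != v -> ~~ prefix u.1 v.1.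
  move=> uU vU uv; apply/negP => uv_pre.
  have [w wT vw] := nodes_prefix_leaf (UT v vU).
  have : (2 <= count (fun x => prefix x.1 w) U)%N.
    rewrite -size_filter (@uniq_leq_size _ [:: u; v]) //= ?inE ?uv //.
    move=> x; rewrite !inE mem_filter => /orP [] /eqP ->.
      by rewrite uU (prefix_trans uv_pre vw).
    by rewrite vU vw.
  by rewrite cnt.
move=> u v uU vU uv; have := nodes_prefix_or_disj vT (UT u uU) (UT v vU).
by rewrite (negbTE (not_prefix u v _ _ _)) // (negbTE (not_prefix v u _ _ _)) // eq_sym.
Qed.

Theorem theorem3p3 (X : seq point) (T : ptree) (U : seq (seq bool * (int * int))) :
  uniq X -> semi_perm X -> is_ptree X T -> cut X T U ->
  (\sum_(u <- U) opt (strip_inst X u.2) + opt (compressed X U) <= opt X)%N.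
Proof.
move=> _ _ vT cutU; apply: opt_split_le; first by case: cutU.
exact: cut_strip_disj vT cutU.
Qed.
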